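(* Let $(A,E)$ be the direct producted $W^*$-probability space over $D_N$ of $W^*$-probability spaces $(A_1,\varphi_1),\dots,(A_N,\varphi_N)$, and let $x=(a_1,\dots,a_N)\in A$. Then $x$ is $D_N$-even (resp. $D_N$-valued R-diagonal) if and only if every nonzero $a_j$ is even (resp. R-diagonal) in $(A_j,\varphi_j)$, $j=1,\dots,N$.
   Context: Each $A_j$ is a von Neumann algebra and $\varphi_j$ a state on $A_j$ with $\varphi_j(a^* )=\overline{\varphi_j(a)}$. $A=\times_{j=1}^N A_j$ with componentwise operations and adjoint $(a_1,\dots,a_N)^*=(a_1^*,\dots,a_N^* )$; $D_N=\mathbb{C}^N$ with componentwise operations, identified with the central subalgebra $\{(\alpha_1 1,\dots,\alpha_N 1)\}$ of $A$; $E((a_1,\dots,a_N))=(\varphi_1(a_1),\dots,\varphi_N(a_N))$. $D_N$-valued cumulants: $k_n(y_1,\dots,y_n)=\sum_{\sigma\in NC(n)}\prod_{V\in\sigma}E(\prod_{l\in V}y_l)\,\mu(\sigma,1_n)$; scalar cumulants $k_n^{(j)}$ analogously with $\varphi_j$. $x\in A$ is $D_N$-even if it is self-adjoint and $E(x^{2m-1})=0$ for all $m\in\mathbb{N}$; $a\in A_j$ is even if self-adjoint with $\varphi_j(a^{2m-1})=0$ for all $m$. $x$ is $D_N$-valued R-diagonal if the only nonvanishing mixed trivial $D_N$-valued cumulants of $x,x^*$ are $k_{2n}(x,x^*,\dots,x,x^* )$ or $k_{2n}(x^*,x,\dots,x^*,x)$; $a\in A_j$ is R-diagonal if the only nonvanishing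 cumulants $k^{(j)}_m(a^{u_1},\dots,a^{u_m})$, $u_l\in\{1,*\}$, are the alternating ones of even length. *)

From mathcomp Require Import all_boot all_order all_algebra.
From mathcomp Require Import reals.
From mathcomp.real_closed Require Export complex.
Set Implicit Arguments. Unset Strict Implicit. Unset Printing Implicit Defensive.
Import Order.TTheory GRing.Theory Num.Theory.
Local Open Scope ring_scope.

Record starAlg (C : numClosedFieldType) := StarAlg {
  sa_car :> lalgType C;
  sa_star : sa_car -> sa_car;
  sa_starK : forall a, sa_star (sa_star a) = a;
  sa_starD : forall a b, sa_star (a + b) = sa_star a + sa_star b;
  sa_starZ : forall (c : C) a, sa_star (c *: a) = c^* *: sa_star a;
  sa_starM : forall a b, sa_star (a * b) = sa_star b * sa_star a
}.

Record state (C : numClosedFieldType) (A : starAlg C) := State {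
  st_fun :> A -> C;
  st_linear : forall (c : C) (a b : A), st_fun (c *: a + b) = c * st_fun a + st_fun b;
  st_unit : st_fun 1 = 1;
  st_pos : forall a : A, 0 <= st_fun (sa_star a * a);
  st_star : forall a : A, st_fun (sa_star a) = (st_fun a)^*
}.

Definition noncrossing n (s : {set {set 'I_n}}) : bool :=
  partition s [set: 'I_n] &&
  [forall V in s, forall W in s, (V != W) ==>
    [forall a : 'I_n, forall b : 'I_n, forall c : 'I_n, forall d : 'I_n,
      ~~ [&& (a < b)%N, (b < c)%N, (c < d)%N, a \in V, c \in V, b \in W & d \in W]]].

Definition oneNC n : {set {set 'I_n}} := [set [set: 'I_n]].

Definition refines n (s t : {set {set 'I_n}}) : bool :=
  [forall V in s, exists W in t, V \subset W].

(* mu(s, 1_n) via the recursion mu(1,1)=1, mu(s,1) = - sum_{s<t<=1} mu(t,1);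
   [k] is fuel (a strictly coarser partition has strictly fewer blocks,
   so fuel n suffices). *)
Fixpoint mobius_fuel n (k : nat) (s : {set {set 'I_n}}) : int :=
  if s == oneNC n then 1 else
  match k with
  | 0 => 0
  | k'.+1 => - \sum_(t : {set {set 'I_n}} | noncrossing t && refines s t && (s != t))
                 mobius_fuel k' t
  end.

Definition mobius1 n (s : {set {set 'I_n}}) : int := mobius_fuel n s.

Definition cumulant (C : numClosedFieldType) (A : lalgType C) (phi : A -> C)
    n (y : 'I_n -> A) : C :=
  \sum_(s : {set {set 'I_n}} | noncrossing s)
     (\prod_(V in s) phi (\prod_(l < n | l \in V) y l)) * (mobius1 s)%:~R.

Section DirectProduct.
Variables (C : numClosedFieldType) (N : nat) (A : 'I_N -> starAlg C)
          (phi : forall j, state (A j)).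

Definition prodA := forall j : 'I_N, A j.
Definition DN := 'I_N -> C.

Definition prod_star (x : prodA) : prodA := fun j => sa_star (x j).
Definition prod_blockA n (y : 'I_n -> prodA) (V : {set 'I_n}) : prodA :=
  fun j => \prod_(l < n | l \in V) y l j.
Definition prod_powA (x : prodA) (m : nat) : prodA := fun j => x j ^+ m.
Definition condE (x : prodA) : DN := fun j => phi j (x j).

Definition cumulantD n (y : 'I_n -> prodA) : DN :=
  fun j => \sum_(s : {set {set 'I_n}} | noncrossing s)
     (\prod_(V in s) condE (prod_blockA y V) j) * (mobius1 s)%:~R.

Definition DN_even (x : prodA) : Prop :=
  prod_star x = x /\ forall m : nat, (0 < m)%N -> condE (prod_powA x (2 * m - 1)) = (fun _ => 0).

(* word in x, x^* : u l = true means x^* at position l *)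
Definition alternating n (u : 'I_n -> bool) : Prop :=
  ~~ odd n /\ forall l l' : 'I_n, (l' = l.+1 :> nat) -> u l' = ~~ u l.

Definition DN_Rdiagonal (x : prodA) : Prop :=
  forall n (u : 'I_n -> bool), (0 < n)%N ->
    cumulantD (fun l => if u l then prod_star x else x) <> (fun _ => 0) ->
    alternating u.
End DirectProduct.

Definition is_even (C : numClosedFieldType) (B : starAlg C) (psi : state B) (a : B) : Prop :=
  sa_star a = a /\ forall m : nat, (0 < m)%N -> psi (a ^+ (2 * m - 1)) = 0.

Definition is_Rdiagonal (C : numClosedFieldType) (B : starAlg C) (psi : state B) (a : B) : Prop :=
  forall n (u : 'I_n -> bool), (0 < n)%N ->
    cumulant psi (fun l => if u l then sa_star a else a) <> 0 ->
    alternating u.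

(* Everything is componentwise: the [j]-th component of a D_N-valued moment or
   cumulant of words in x, x^* is the corresponding scalar moment or cumulant of
   words in a_j, a_j^*, so x is D_N-even (D_N-valued R-diagonal) iff every a_j is
   even (R-diagonal).  A zero component imposes no condition, since 0 is both even
   and R-diagonal: its odd moments and all its cumulants vanish. *)
From mathcomp Require Import all_boot all_order all_algebra.
From mathcomp Require Import reals boolp.
From mathcomp.real_closed Require Import complex.
Set Implicit Arguments. Unset Strict Implicit. Unset Printing Implicit Defensive.
Import GRing.Theory Num.Theory.
Local Open Scope ring_scope.

Section ZeroElement.
Variables (C : numClosedFieldType) (B : starAlg C).

Lemma sa_star0 : sa_star (0 : B) = 0.
Proof. by apply: (addrI (sa_star (0 : B))); rewrite -sa_starD !addr0. Qed.

Lemma state0 (psi : state B) : psi 0 = 0.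
Proof.
have := st_linear psi 1 0 0; rewrite scaler0 addr0 mul1r => psi00.
by apply: (addrI (psi 0)); rewrite addr0 -{1}psi00.
Qed.

Lemma cumulant0 (psi : state B) n :
  (0 < n)%N -> cumulant psi (fun _ : 'I_n => 0 : B) = 0.
Proof.
move=> n_gt0; rewrite /cumulant big1 // => s /andP[/andP[/eqP cover_s _] _].
have : Ordinal n_gt0 \in cover s by rewrite cover_s inE.
move=> /bigcupP[V sV VP]; rewrite (bigD1 V) //= prodr_const.
have : (0 < #|V|)%N by apply/card_gt0P; exists (Ordinal n_gt0).
by case: #|V| => // k _; rewrite expr0n state0 !mul0r.
Qed.

Lemma is_even0 (psi : state B) : is_even psi 0.
Proof.
split=> [|m m_gt0]; first exact: sa_star0.
case: m m_gt0 => // m _.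
by rewrite mul2n doubleS subn1 /= exprS mul0r state0.
Qed.

Lemma is_Rdiagonal0 (psi : state B) : is_Rdiagonal psi 0.
Proof.
move=> n u n_gt0; rewrite (_ : (fun l => _) = fun _ => 0) ?cumulant0 //.
by apply/funext => l; case: (u l); rewrite ?sa_star0.
Qed.

End ZeroElement.

Section Componentwise.
Variables (C : numClosedFieldType) (N : nat) (A : 'I_N -> starAlg C)
          (phi : forall j, state (A j)).

Lemma cumulantD_component n (y : 'I_n -> prodA A) j :
  cumulantD phi y j = cumulant (phi j) (fun l => y l j).
Proof. by []. Qed.

Lemma DN_evenE (x : prodA A) :
  DN_even phi x <-> forall j, is_even (phi j) (x j).
Proof.
split=> [[x_sa x_odd] j|x_even].
  by split=> [|m /x_odd /(congr1 (@^~ j))]; first exact: (congr1 (@^~ j) x_sa).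
split=> [|m m_gt0]; apply: functional_extensionality_dep => j.
  by case: (x_even j).
by case: (x_even j) => _ /(_ m m_gt0).
Qed.

Lemma cumulantD_word (x : prodA A) n (u : 'I_n -> bool) j :
  cumulantD phi (fun l => if u l then prod_star x else x) j =
  cumulant (phi j) (fun l => if u l then sa_star (x j) else x j).
Proof.
by rewrite cumulantD_component; congr cumulant; apply/funext => l; case: (u l).
Qed.

Lemma DN_RdiagonalE (x : prodA A) :
  DN_Rdiagonal phi x <-> forall j, is_Rdiagonal (phi j) (x j).
Proof.
split=> [x_Rdiag j n u n_gt0 kj_neq0|x_Rdiag n u n_gt0 k_neq0].
  apply: (x_Rdiag n u n_gt0) => k_eq0; apply: kj_neq0.
  by rewrite -cumulantD_word k_eq0.
apply: contrapT => not_alt; apply: k_neq0; apply/funext => j.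
rewrite cumulantD_word; apply: contrapT => kj_neq0.
exact: not_alt (x_Rdiag j n u n_gt0 kj_neq0).
Qed.

Lemma forall_nonzero_components (P : forall j, A j -> Prop) (x : prodA A) :
  (forall j, P j 0) ->
  (forall j, P j (x j)) <-> (forall j, x j != 0 -> P j (x j)).
Proof.
move=> P0; split=> [Px j _|Px j]; first exact: Px.
by have [->|/Px] := eqVneq (x j) 0.
Qed.

End Componentwise.

Theorem mainTheorem13 (R : realType) (N : nat) (A : 'I_N -> starAlg R[i])
    (phi : forall j, state (A j)) (x : prodA A) :
  (DN_even phi x <-> (forall j : 'I_N, x j != 0 -> is_even (phi j) (x j))) /\
  (DN_Rdiagonal phi x <-> (forall j : 'I_N, x j != 0 -> is_Rdiagonal (phi j) (x j))).
Proof.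
split.
- rewrite DN_evenE.
  apply: (forall_nonzero_components (P := fun j => is_even (phi j)) x).
  by move=> j; apply: is_even0.
- rewrite DN_RdiagonalE.
  apply: (forall_nonzero_components (P := fun j => is_Rdiagonal (phi j)) x).
  by move=> j; apply: is_Rdiagonal0.
Qed.
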